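(* Consider the gradient flow $\frac{d}{dt}\mathbf w=-(I_d-\mathbf w\mathbf w^T)\nabla L(\mathbf w)$ started from a unit vector $\mathbf w(0)$, and let $\mathbf u(t)=V^T\mathbf w(t)\in\mathbb R^k$. Consider the regime in which $d$ is large while $k$, the matrix $A=V^TV$ and the activations $\sigma,\sigma^*$ are fixed (independent of $d$). Assume $\mathbf u_j(0)>0$ and $\mathbf u_j(0)=\Theta(d^{-1/2})$ for all $j\in[k]$, and $p^*\ge 2$. Then: (i) if $p^*\ge 3$, a time $T=\Theta(d^{p^*/2-1})$ is necessary and sufficient to reach $\|\mathbf u(T)\|_2=\Theta(1)$; (ii) if $p^*=2$, a time $T=\Theta(\log d)$ is necessary and sufficient to reach $\|\mathbf u(T)\|_2=\Theta(1)$.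
   Context: Let $h_0=1,h_1(x)=x,h_2(x)=(x^2-1)/\sqrt2,\dots$ be the probabilist's Hermite polynomials normalized to be orthonormal in $L^2$ of the standard Gaussian measure on $\mathbb R$. Let $\sigma,\sigma^*:\mathbb R\to\mathbb R$ be square integrable with respect to the standard Gaussian, with expansions $\sigma=\sum_{p\ge1}a_ph_p$, $\sigma^*=\sum_{p\ge1}b_ph_p$. The information exponent of $\sigma^*$ is $p^*=\min\{p\ge1:b_p\neq0\}$; write $c_p=a_pb_p$. Standing assumptions: $c_{p^*}>0$ and $c_p\ge0$ for all $p\ge p^*$. Let $\mathbf v_1,\dots,\mathbf v_k\in\mathbb R^d$ be linearly independent unit vectors (index vectors), $V=[\mathbf v_1,\dots,\mathbf v_k]$, $A=V^TV$, with $\sum_{p\ge p^*}c_p\,p\,\lambda_{\max}(A)^{p/2}<\infty$, and with $\mathbf v_j^T\mathbf v_{j'}\ge0$ for all $j,j'\in[k]$. The correlation loss is $L(\mathbf w)=C-\mathbb E_{\mathbf x\sim\mathcal N(0,I_d)}\big[\sigma(\mathbf w^T\mathbf x)\sum_{j=1}^k\sigma^*(\mathbf v_j^T\mathbf x)\big]$ for a constant $C$; for unit $\mathbf w$ it equals $C-\sum_{p\ge p^*}c_p\sum_{j=1}^k(\mathbf v_j^T\mathbf w)^p$, and this formula defines $L$ and its Euclidean gradient $\nabla L$ on $\mathbb R^d$. The $\Theta(\cdot)$ statements hide constants independent of $d$. *)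

From Stdlib Require Import Reals.
From Coquelicot Require Import Coquelicot.
Open Scope R_scope.

(* Vectors of R^n are represented as functions nat -> R; only the
   coordinates 0..n-1 are relevant. *)

Fixpoint fsum (n : nat) (f : nat -> R) : R :=
  match n with
  | O => 0
  | S m => fsum m f + f m
  end.

Definition dot (n : nat) (x y : nat -> R) : R := fsum n (fun i => x i * y i).
Definition norm2 (n : nat) (x : nat -> R) : R := sqrt (dot n x x).

(* c_p = a_p b_p, where (a_p), (b_p) are the Hermite coefficients of
   sigma and sigma^* (w.r.t. the orthonormal Hermite polynomials h_p). *)
Definition ccoef (a b : nat -> R) (p : nat) : R := a p * b p.

Definition info_exponent (b : nat -> R) (pstar : nat) : Prop :=
  (1 <= pstar)%nat /\ b pstar <> 0 /\
  (forall p, (1 <= p)%nat -> (p < pstar)%nat -> b p = 0).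

Definition is_eigenvalue (k : nat) (A : nat -> nat -> R) (lam : R) : Prop :=
  exists x : nat -> R, (exists j, (j < k)%nat /\ x j <> 0) /\
    forall i, (i < k)%nat -> fsum k (fun j => A i j * x j) = lam * x i.

Definition is_lambda_max (k : nat) (A : nat -> nat -> R) (lam : R) : Prop :=
  is_eigenvalue k A lam /\ (forall mu, is_eigenvalue k A mu -> mu <= lam).

(* derivative of s |-> sum_p c_p s^p, i.e.  sum_p p c_p s^(p-1) *)
Definition dpot (a b : nat -> R) (s : R) : R :=
  Series (fun p => INR p * ccoef a b p * s ^ (p - 1)).

(* Euclidean gradient of L(w) = C - sum_p c_p sum_j (v_j^T w)^p on R^d,
   V j = v_j : (i-th coordinate V j i). *)
Definition gradL (a b : nat -> R) (d k : nat) (V : nat -> nat -> R)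
    (w : nat -> R) : nat -> R :=
  fun i => - fsum k (fun j => dpot a b (dot d (V j) w) * V j i).

Definition flow_field (a b : nat -> R) (d k : nat) (V : nat -> nat -> R)
    (w : nat -> R) : nat -> R :=
  fun i => - (gradL a b d k V w i - w i * dot d w (gradL a b d k V w)).

Definition is_flow (a b : nat -> R) (d k : nat) (V : nat -> nat -> R)
    (w : R -> nat -> R) : Prop :=
  (forall i, (i < d)%nat ->
     filterlim (fun t => w t i) (at_right 0) (locally (w 0 i))) /\
  (forall t, 0 < t -> forall i, (i < d)%nat ->
     is_derive (fun s => w s i) t (flow_field a b d k V (w t) i)) /\
  (forall t, 0 <= t -> dot d (w t) (w t) = 1).

Definition u_of (d : nat) (V : nat -> nat -> R) (w : R -> nat -> R) (t : R) :
  nat -> R := fun j => dot d (V j) (w t).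
Definition unorm (d k : nat) (V : nat -> nat -> R) (w : R -> nat -> R) (t : R) : R :=
  norm2 k (u_of d V w t).

Definition admissible (a b : nat -> R) (k : nat) (A : nat -> nat -> R)
    (c1 c2 : R) (d : nat) (V : nat -> nat -> R) (w : R -> nat -> R) : Prop :=
  (forall j, (j < k)%nat -> dot d (V j) (V j) = 1) /\
  (forall alpha : nat -> R,
     (forall i, (i < d)%nat -> fsum k (fun j => alpha j * V j i) = 0) ->
     forall j, (j < k)%nat -> alpha j = 0) /\
  (forall j j', (j < k)%nat -> (j' < k)%nat -> dot d (V j) (V j') = A j j') /\
  (forall j j', (j < k)%nat -> (j' < k)%nat -> 0 <= dot d (V j) (V j')) /\
  is_flow a b d k V w /\
  (forall j, (j < k)%nat ->
     0 < u_of d V w 0 j /\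
     c1 / sqrt (INR d) <= u_of d V w 0 j <= c2 / sqrt (INR d)).

(* "A time T = Theta(S d) is necessary and sufficient to reach ||u(T)|| = Theta(1)" *)
Definition escape_time_Theta (a b : nat -> R) (k : nat) (A : nat -> nat -> R)
    (S : nat -> R) : Prop :=
  forall c1 c2 : R, 0 < c1 -> c1 <= c2 ->
  (exists delta Delta C : R, exists D0 : nat,
     0 < delta /\ 0 < C /\
     forall d : nat, (D0 <= d)%nat ->
     forall V w, admissible a b k A c1 c2 d V w ->
       delta <= unorm d k V w (C * S d) <= Delta) /\
  (forall delta : R, 0 < delta ->
   exists c : R, exists D0 : nat, 0 < c /\
     forall d : nat, (D0 <= d)%nat ->
     forall V w, admissible a b k A c1 c2 d V w ->
     forall t, 0 <= t <= c * S d -> unorm d k V w t < delta).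

From Stdlib Require Import Reals Lra Lia.
From Coquelicot Require Import Coquelicot.
Open Scope R_scope.

(* Along the flow the overlaps [u_j = <v_j, w>] solve the closed system
   [u_j' = sum_l phi'(u_l) (A_jl - u_j u_l)], where [phi'(s) = sum_p p c_p s^(p-1)] behaves
   like [s^(p*-1)] near [0].  A Gronwall argument on the negative parts keeps every [u_j]
   nonnegative; then, as long as [S = sum_j u_j] stays below a fixed radius, the drift of [S]
   is pinched between two multiples of [S^(p*-1)].  Comparing [S] with the ODE
   [x' = x^(p*-1)] through a primitive [Phi] of [x^-(p*-1)], the time for [S] to become of
   order one is of order [Phi(r) - Phi(S(0))] with [S(0) = Theta(d^(-1/2))], that is
   [d^(p*/2-1)] for [p* >= 3] and [log d] for [p* = 2]; and [||u||] is comparable to [S]. *)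

(** * Finite sums *)

Lemma fsum_ext n f g : (forall i, (i < n)%nat -> f i = g i) -> fsum n f = fsum n g.
Proof.
  induction n as [|n IH]; intros H; simpl; [reflexivity|].
  rewrite IH by (intros; apply H; lia). rewrite (H n) by lia. reflexivity.
Qed.

Lemma fsum_plus n f g : fsum n (fun i => f i + g i) = fsum n f + fsum n g.
Proof. induction n as [|n IH]; simpl; [ring | rewrite IH; ring]. Qed.

Lemma fsum_minus n f g : fsum n (fun i => f i - g i) = fsum n f - fsum n g.
Proof. induction n as [|n IH]; simpl; [ring | rewrite IH; ring]. Qed.

Lemma fsum_scal n c f : fsum n (fun i => c * f i) = c * fsum n f.
Proof. induction n as [|n IH]; simpl; [ring | rewrite IH; ring]. Qed.

Lemma fsum_const n c : fsum n (fun _ => c) = INR n * c.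
Proof. induction n as [|n IH]; simpl fsum; [simpl; ring | rewrite IH, S_INR; ring]. Qed.

Lemma fsum_swap n m (f : nat -> nat -> R) :
  fsum n (fun i => fsum m (f i)) = fsum m (fun j => fsum n (fun i => f i j)).
Proof.
  induction n as [|n IH]; simpl.
  - rewrite fsum_const, Rmult_0_r. reflexivity.
  - rewrite IH, <- fsum_plus. reflexivity.
Qed.

Lemma fsum_le n f g : (forall i, (i < n)%nat -> f i <= g i) -> fsum n f <= fsum n g.
Proof.
  induction n as [|n IH]; intros H; simpl; [lra|].
  apply Rplus_le_compat; [apply IH; intros; apply H|apply H]; lia.
Qed.

Lemma fsum_nonneg n f : (forall i, (i < n)%nat -> 0 <= f i) -> 0 <= fsum n f.
Proof. intros H. rewrite <- (Rmult_0_r (INR n)), <- fsum_const. now apply fsum_le. Qed.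

Lemma fsum_term_le n f j :
  (forall i, (i < n)%nat -> 0 <= f i) -> (j < n)%nat -> f j <= fsum n f.
Proof.
  induction n as [|n IH]; intros H Hj; simpl; [lia|].
  destruct (Nat.eq_dec j n) as [->|Hne].
  - assert (0 <= fsum n f) by (apply fsum_nonneg; intros; apply H; lia). lra.
  - assert (f j <= fsum n f) by (apply IH; [intros; apply H|]; lia).
    assert (0 <= f n) by (apply H; lia). lra.
Qed.

Lemma fsum_le_const n f M : (forall i, (i < n)%nat -> f i <= M) -> fsum n f <= INR n * M.
Proof. intros H. rewrite <- fsum_const. now apply fsum_le. Qed.

Lemma fsum_ge_const n f M : (forall i, (i < n)%nat -> M <= f i) -> INR n * M <= fsum n f.
Proof. intros H. rewrite <- fsum_const. now apply fsum_le. Qed.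

Lemma fsum_argmax n f : (0 < n)%nat ->
  exists j, (j < n)%nat /\ forall i, (i < n)%nat -> f i <= f j.
Proof.
  induction n as [|n IH]; intros Hn; [lia|].
  destruct (Nat.eq_dec n 0) as [->|Hn0].
  { exists 0%nat. split; [lia|]. intros i Hi. replace i with 0%nat by lia. lra. }
  destruct (IH ltac:(lia)) as [j [Hj Hmax]].
  destruct (Rle_dec (f n) (f j)) as [Hle|Hgt].
  - exists j. split; [lia|]. intros i Hi.
    destruct (Nat.eq_dec i n) as [->|]; [exact Hle | apply Hmax; lia].
  - exists n. split; [lia|]. intros i Hi.
    destruct (Nat.eq_dec i n) as [->|]; [lra|].
    pose proof (Hmax i ltac:(lia)). lra.
Qed.

Lemma fsum_le_max_term n f : (0 < n)%nat -> exists j, (j < n)%nat /\ fsum n f <= INR n * f j.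
Proof.
  intros Hn. destruct (fsum_argmax n f Hn) as [j [Hj Hmax]].
  exists j. split; [exact Hj|]. now apply fsum_le_const.
Qed.

Lemma is_derive_fsum n (f : nat -> R -> R) df t :
  (forall i, (i < n)%nat -> is_derive (f i) t (df i)) ->
  is_derive (fun s => fsum n (fun i => f i s)) t (fsum n df).
Proof.
  induction n as [|n IH]; intros H; simpl.
  - apply (@is_derive_const R_AbsRing R_NormedModule).
  - apply (@is_derive_plus R_AbsRing R_NormedModule); [apply IH; intros|apply H]; auto.
Qed.

Lemma continuous_fsum n (f : nat -> R -> R) t :
  (forall i, (i < n)%nat -> continuous (f i) t) ->
  continuous (fun s => fsum n (fun i => f i s)) t.
Proof.
  induction n as [|n IH]; intros H; simpl.
  - apply (@continuous_const R_UniformSpace R_UniformSpace).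
  - apply (@continuous_plus R_UniformSpace R_AbsRing R_NormedModule);
      [apply IH; intros | apply H]; auto.
Qed.

Lemma dot_comm n x y : dot n x y = dot n y x.
Proof. apply fsum_ext. intros; ring. Qed.

Lemma Rabs_dot_le n x y : Rabs (dot n x y) <= (dot n x x + dot n y y) / 2.
Proof.
  assert (Hsq : forall e : R, fsum n (fun i => (x i + e * y i) ^ 2) =
                dot n x x + e ^ 2 * dot n y y + 2 * e * dot n x y).
  { intros e. unfold dot. rewrite <- !fsum_scal, <- !fsum_plus.
    apply fsum_ext. intros; ring. }
  assert (Hpos : forall e : R, 0 <= fsum n (fun i => (x i + e * y i) ^ 2))
    by (intros; apply fsum_nonneg; intros; apply pow2_ge_0).
  pose proof (Hsq 1). pose proof (Hsq (-1)). pose proof (Hpos 1). pose proof (Hpos (-1)).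
  apply Rabs_le. lra.
Qed.

Lemma norm2_le_fsum n x : (forall j, (j < n)%nat -> 0 <= x j) -> norm2 n x <= fsum n x.
Proof.
  intros Hx. pose proof (fsum_nonneg n x Hx) as Hs.
  unfold norm2. rewrite <- (sqrt_square (fsum n x)) by exact Hs. apply sqrt_le_1_alt.
  unfold dot. rewrite <- fsum_scal. apply fsum_le. intros j Hj.
  pose proof (Hx j Hj). pose proof (fsum_term_le n x j Hx Hj). nra.
Qed.

Lemma fsum_le_norm2 n x : (0 < n)%nat -> (forall j, (j < n)%nat -> 0 <= x j) ->
  fsum n x <= INR n * norm2 n x.
Proof.
  intros Hn Hx. destruct (fsum_le_max_term n x Hn) as [j [Hj Hmax]].
  eapply Rle_trans; [exact Hmax|]. apply Rmult_le_compat_l; [apply pos_INR|].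
  unfold norm2. rewrite <- (sqrt_square (x j)) by (apply Hx, Hj). apply sqrt_le_1_alt.
  apply (fsum_term_le n (fun i => x i * x i)); [|exact Hj].
  intros i Hi. pose proof (Hx i Hi). nra.
Qed.

Lemma norm2_le_sqrt n x : (forall j, (j < n)%nat -> -1 <= x j <= 1) ->
  norm2 n x <= sqrt (INR n).
Proof.
  intros Hx. apply sqrt_le_1_alt. rewrite <- (Rmult_1_r (INR n)).
  apply fsum_le_const. intros j Hj. specialize (Hx j Hj). nra.
Qed.

(** * Comparison principles *)

Lemma continuous_eps_delta (h : R -> R) (m eps : R) : continuous h m -> 0 < eps ->
  exists del, 0 < del /\ forall t, Rabs (t - m) < del -> Rabs (h t - h m) < eps.
Proof.
  intros Hc Heps. apply continuity_pt_filterlim in Hc.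
  destruct (Hc eps Heps) as [del [Hdel H]].
  exists del. split; [exact Hdel|]. intros t Ht.
  destruct (Req_dec t m) as [->|Hne].
  - rewrite Rminus_eq_0, Rabs_R0. exact Heps.
  - apply H. split; [split; [exact I | auto] | exact Ht].
Qed.

Lemma MVT_open (f df : R -> R) (a b : R) : a < b ->
  (forall c, a < c < b -> is_derive f c (df c)) ->
  (forall c, a <= c <= b -> continuity_pt f c) ->
  exists c, a < c < b /\ f b - f a = df c * (b - a).
Proof.
  intros Hab Hd Hc.
  pose (pr1 := fun c (P : a < c < b) =>
    exist (fun l => derivable_pt_abs f c l) (df c) (proj1 (is_derive_Reals _ _ _) (Hd c P))).
  destruct (MVT f id a b pr1 (fun c _ => derivable_pt_id c) Hab Hc
              (fun c _ => derivable_continuous_pt _ _ (derivable_pt_id c))) as [c [P HP]].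
  exists c. split; [exact P|].
  rewrite derive_pt_id in HP. simpl in HP. unfold id in HP. lra.
Qed.

Lemma last_time_below (h : R -> R) (a b y : R) : a <= b ->
  (forall t, a <= t <= b -> continuous h t) -> h a <= y ->
  exists s, a <= s <= b /\ h s <= y /\ forall t, s < t <= b -> y < h t.
Proof.
  intros Hab Hc Ha.
  set (E := fun t => a <= t <= b /\ h t <= y).
  assert (Hb : bound E) by (exists b; intros t [[_ Ht] _]; exact Ht).
  destruct (completeness E Hb (ex_intro _ a (conj (conj (Rle_refl a) Hab) Ha)))
    as [m [Hub Hlub]].
  assert (Ham : a <= m) by (apply Hub; split; [lra|exact Ha]).
  assert (Hmb : m <= b) by (apply Hlub; intros t [[_ Ht] _]; exact Ht).
  exists m. split; [lra|]. split.
  - apply Rnot_lt_le. intros Hgt.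
    destruct (continuous_eps_delta h m (h m - y) (Hc m (conj Ham Hmb))) as [del [Hdel Hd]];
      [lra|].
    enough (m <= m - del / 2) by lra.
    apply Hlub. intros t [Ht Hty]. apply Rnot_lt_le. intros Hlt.
    assert (t <= m) by (apply Hub; split; auto).
    specialize (Hd t ltac:(rewrite Rabs_left1 by lra; lra)).
    apply Rabs_lt_between in Hd. lra.
  - intros t Ht. apply Rnot_le_lt. intros Hle.
    assert (t <= m) by (apply Hub; split; [lra|exact Hle]). lra.
Qed.

(* If [h b > 0], the mean value theorem just after the last time [h <= 0] gives a
   contradiction, since [0 < h < eta] there. *)
Lemma barrier_nonpos (h dh : R -> R) (a b eta : R) : a <= b -> 0 < eta -> continuous h a ->
  (forall t, a < t <= b -> is_derive h t (dh t)) -> h a <= 0 ->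
  (forall t, a < t <= b -> 0 < h t < eta -> dh t <= 0) -> h b <= 0.
Proof.
  intros Hab Heta Hca Hd Ha Hsign.
  apply Rnot_lt_le. intros Hb.
  assert (Hc : forall t, a <= t <= b -> continuous h t).
  { intros t Ht. destruct (Req_dec t a) as [->|Hne]; [exact Hca|].
    apply (@ex_derive_continuous R_AbsRing R_NormedModule). exists (dh t). apply Hd. lra. }
  destruct (last_time_below h a b 0 Hab Hc Ha) as [s [Hs [Hhs Hpos]]].
  assert (Hsb : s < b) by (destruct (Req_dec s b) as [->|]; lra).
  destruct (continuous_eps_delta h s eta (Hc s Hs) Heta) as [del [Hdel Hnear]].
  set (s' := Rmin b (s + del / 2)).
  assert (Hs' : s < s' <= b) by (unfold s'; split; [apply Rmin_glb_lt|apply Rmin_l]; lra).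
  assert (Hs'del : s' <= s + del / 2) by apply Rmin_r.
  destruct (MVT_open h dh s s') as [xi [Hxi Heq]].
  - lra.
  - intros x Hx. apply Hd. lra.
  - intros x Hx. apply continuity_pt_filterlim, Hc. lra.
  - assert (Hhxi : h xi < eta).
    { specialize (Hnear xi ltac:(rewrite Rabs_right by lra; lra)).
      apply Rabs_lt_between in Hnear. lra. }
    assert (dh xi <= 0) by (apply Hsign; [|split; [apply Hpos|]]; lra).
    pose proof (Hpos s' Hs'). nra.
Qed.

Lemma barrier_nonneg (h dh : R -> R) (a b eta : R) : a <= b -> 0 < eta -> continuous h a ->
  (forall t, a < t <= b -> is_derive h t (dh t)) -> 0 <= h a ->
  (forall t, a < t <= b -> - eta < h t < 0 -> 0 <= dh t) -> 0 <= h b.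
Proof.
  intros Hab Heta Hca Hd Ha Hsign.
  enough (- h b <= 0) by lra.
  apply (barrier_nonpos (fun t => - h t) (fun t => - dh t) a b eta); try lra.
  - apply (@continuous_opp R_UniformSpace R_AbsRing R_NormedModule), Hca.
  - intros t Ht. apply (@is_derive_opp R_AbsRing R_NormedModule), Hd, Ht.
  - intros t Ht Hh. pose proof (Hsign t Ht ltac:(lra)). lra.
Qed.

Lemma gronwall_nonpos (h dh : R -> R) (a b L eta : R) :
  a <= b -> 0 < eta -> 0 <= L -> continuous h a ->
  (forall t, a < t <= b -> is_derive h t (dh t)) -> h a <= 0 ->
  (forall t, a < t <= b -> 0 < h t < eta -> dh t <= L * h t) -> h b <= 0.
Proof.
  intros Hab Heta HL Hca Hd Ha Hsign.
  set (e := fun t => exp (- L * (t - a))).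
  assert (He : forall t : R, is_derive e t (- L * e t)).
  { intros t. unfold e, Rminus. auto_derive; [exact I | ring]. }
  assert (Hbar : e b * h b <= 0).
  { apply (barrier_nonpos (fun t => e t * h t) (fun t => e t * (dh t - L * h t))
             a b (eta * e b)); try lra.
    - apply Rmult_lt_0_compat; [lra | apply exp_pos].
    - apply (@continuous_mult R_UniformSpace R_AbsRing); [|exact Hca].
      apply (@ex_derive_continuous R_AbsRing R_NormedModule). eexists. apply He.
    - intros t Ht.
      replace (e t * (dh t - L * h t)) with (- L * e t * h t + e t * dh t) by ring.
      apply (@is_derive_mult R_AbsRing); [apply He | apply Hd; exact Ht | apply Rmult_comm].
    - unfold e. rewrite Rminus_diag, Rmult_0_r, exp_0. lra.
    - intros t Ht [Hpos Hlt].
      assert (Het : 0 < e t) by apply exp_pos.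
      assert (Hht : 0 < h t) by nra.
      assert (Hebt : e b <= e t).
      { unfold e. destruct (Rle_lt_or_eq_dec (- L * (b - a)) (- L * (t - a))) as [Hl|He'].
        - nra.
        - left. apply exp_increasing, Hl.
        - right. rewrite He'. reflexivity. }
      assert (dh t <= L * h t) by (apply Hsign; [exact Ht | split; nra]).
      nra. }
  assert (Heb : 0 < e b) by apply exp_pos. nra.
Qed.

Lemma stays_above (X dX : R -> R) (a b y : R) : a <= b -> continuous X a ->
  (forall t, a < t <= b -> is_derive X t (dX t)) ->
  (forall t, a < t <= b -> X t < y -> 0 <= dX t) -> y <= X a -> y <= X b.
Proof.
  intros Hab Hca Hd Hsign Ha.
  enough (y - X b <= 0) by lra.
  apply (barrier_nonpos (fun t => y - X t) (fun t => 0 - dX t) a b 1); try lra.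
  - apply (@continuous_minus R_UniformSpace R_AbsRing R_NormedModule); [|exact Hca].
    apply (@continuous_const R_UniformSpace R_UniformSpace).
  - intros t Ht. apply (@is_derive_minus R_AbsRing R_NormedModule); [|apply Hd; exact Ht].
    apply (@is_derive_const R_AbsRing R_NormedModule).
  - intros t Ht Hpos. pose proof (Hsign t Ht ltac:(lra)). lra.
Qed.

(* A primitive of [x ^ -(n+1)] on [(0, +oo)]: the ODE [x' = x ^ (n+1)] needs time
   [inv_pow_primitive n y - inv_pow_primitive n x] to travel from [x] to [y]. *)
Definition inv_pow_primitive (n : nat) (x : R) : R :=
  match n with
  | O => ln x
  | S _ => - / (INR n * x ^ n)
  end.

Lemma inv_pow_primitive_derive n x : 0 < x ->
  is_derive (inv_pow_primitive n) x (/ x ^ S n).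
Proof.
  intros Hx. destruct n as [|m].
  - simpl. rewrite Rmult_1_r. apply is_derive_ln, Hx.
  - change (is_derive (fun y => - / (INR (S m) * y ^ S m)) x (/ x ^ S (S m))).
    assert (HN : 0 < INR (S m)) by apply lt_0_INR, Nat.lt_0_succ.
    assert (0 < x ^ m) by (apply pow_lt, Hx).
    remember (INR (S m)) as N eqn:HNe.
    auto_derive; [apply Rgt_not_eq, Rmult_lt_0_compat; [lra | apply Rmult_lt_0_compat; lra]|].
    change (match m with 0%nat => 1 | S _ => INR m + 1 end) with (INR (S m)).
    rewrite <- HNe. simpl. field. split; lra.
Qed.

Lemma inv_pow_primitive_lt n x y : 0 < x -> x < y ->
  inv_pow_primitive n x < inv_pow_primitive n y.
Proof.
  intros Hx Hxy.
  apply (incr_function _ (Finite 0) p_infty (fun z => / z ^ S n)); simpl; auto; intros z Hz _.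
  - apply inv_pow_primitive_derive, Hz.
  - apply Rinv_0_lt_compat, (pow_lt z (S n)), Hz.
Qed.

Lemma inv_pow_primitive_le n x y : 0 < x -> x <= y ->
  inv_pow_primitive n x <= inv_pow_primitive n y.
Proof.
  intros Hx [Hxy|<-]; [left; apply inv_pow_primitive_lt; auto | right; reflexivity].
Qed.

Lemma inv_pow_primitive_lt_inv n x y : 0 < x -> 0 < y ->
  inv_pow_primitive n x < inv_pow_primitive n y -> x < y.
Proof.
  intros Hx Hy H. apply Rnot_le_lt. intros Hyx.
  pose proof (inv_pow_primitive_le n y x Hy Hyx). lra.
Qed.

Lemma inv_pow_primitive_continuous n x : 0 < x -> continuous (inv_pow_primitive n) x.
Proof.
  intros Hx. apply (@ex_derive_continuous R_AbsRing R_NormedModule).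
  eexists. apply inv_pow_primitive_derive, Hx.
Qed.

Lemma primitive_affine_continuous0 (Y : R -> R) n c K : continuous Y 0 -> 0 < Y 0 ->
  continuous (fun t => inv_pow_primitive n (Y t) - (c + K * t)) 0.
Proof.
  intros HY HY0. apply (@continuous_minus R_UniformSpace R_AbsRing R_NormedModule).
  - apply (@continuous_comp R_UniformSpace R_UniformSpace R_UniformSpace Y); [exact HY|].
    apply inv_pow_primitive_continuous, HY0.
  - apply (@continuous_plus R_UniformSpace R_AbsRing R_NormedModule).
    + apply (@continuous_const R_UniformSpace R_UniformSpace).
    + apply (@continuous_mult R_UniformSpace R_AbsRing).
      * apply (@continuous_const R_UniformSpace R_UniformSpace).
      * apply (@continuous_id R_UniformSpace).
Qed.

Lemma primitive_affine_derive (Y : R -> R) n c K t dy : 0 < Y t -> is_derive Y t dy ->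
  is_derive (fun s => inv_pow_primitive n (Y s) - (c + K * s)) t (dy / Y t ^ S n - K).
Proof.
  intros HYt Hd.
  replace (dy / Y t ^ S n - K) with (dy * / Y t ^ S n - (0 + K * 1)) by (unfold Rdiv; ring).
  apply (@is_derive_minus R_AbsRing R_NormedModule).
  - apply (@is_derive_comp R_AbsRing R_NormedModule _ Y); [|exact Hd].
    apply inv_pow_primitive_derive, HYt.
  - apply (@is_derive_plus R_AbsRing R_NormedModule).
    + apply (@is_derive_const R_AbsRing R_NormedModule).
    + apply is_derive_scal, (@is_derive_id R_AbsRing).
Qed.

Lemma primitive_growth_lower (X dX : R -> R) n kappa T :
  0 <= T -> 0 <= kappa -> continuous X 0 -> 0 < X 0 ->
  (forall t, 0 < t <= T -> is_derive X t (dX t)) ->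
  (forall t, 0 < t <= T -> 0 <= X t /\ kappa * X t ^ S n <= dX t) ->
  X 0 <= X T /\ inv_pow_primitive n (X 0) + kappa * T <= inv_pow_primitive n (X T).
Proof.
  intros HT Hk HX0 Hpos0 Hd Hgrow.
  assert (Hmono : forall t, 0 <= t <= T -> X 0 <= X t).
  { intros t Ht. apply (stays_above X dX 0 t); try lra; auto.
    - intros s Hs. apply Hd. lra.
    - intros s Hs _. destruct (Hgrow s ltac:(lra)) as [HXs Hds].
      pose proof (pow_le _ (S n) HXs). nra. }
  split; [apply Hmono; lra|].
  set (c := inv_pow_primitive n (X 0)).
  enough (0 <= inv_pow_primitive n (X T) - (c + kappa * T)) by lra.
  apply (barrier_nonneg (fun t => inv_pow_primitive n (X t) - (c + kappa * t))
           (fun t => dX t / X t ^ S n - kappa) 0 T 1); try lra.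
  - apply primitive_affine_continuous0; assumption.
  - intros t Ht. pose proof (Hmono t ltac:(lra)).
    apply primitive_affine_derive; [lra | apply Hd, Ht].
  - unfold c. lra.
  - intros t Ht _.
    assert (HXn : 0 < X t ^ S n) by (apply pow_lt; pose proof (Hmono t ltac:(lra)); lra).
    destruct (Hgrow t Ht) as [_ Hds].
    enough (kappa <= dX t / X t ^ S n) by lra.
    apply (Rmult_le_reg_r (X t ^ S n)); [exact HXn|].
    unfold Rdiv. rewrite Rmult_assoc, Rinv_l by lra. lra.
Qed.

(* Comparing [X + X 0] rather than [X] keeps the argument of the primitive away from [0]
   without any a priori lower bound on [X]. *)
Lemma primitive_growth_upper (X dX : R -> R) n K r T :
  0 <= T -> 0 <= K -> 0 < r -> continuous X 0 -> 0 < X 0 ->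
  (forall t, 0 < t <= T -> is_derive X t (dX t)) ->
  (forall t, 0 < t <= T -> 0 <= X t) ->
  (forall t, 0 < t <= T -> X t < r -> dX t <= K * X t ^ S n) ->
  inv_pow_primitive n (2 * X 0) + K * T < inv_pow_primitive n r ->
  forall t, 0 <= t <= T -> X t < r.
Proof.
  intros HT HK Hr HX0 Hpos0 Hd Hnonneg Hgrow Hbudget t Ht.
  set (P := inv_pow_primitive n) in *.
  set (Z := fun s => X s + X 0).
  assert (HZ : forall s, 0 <= s <= T -> X 0 <= Z s).
  { intros s Hs. unfold Z. destruct (Req_dec s 0) as [->|]; [lra|].
    pose proof (Hnonneg s ltac:(lra)). lra. }
  assert (HZ0 : Z 0 = 2 * X 0) by (unfold Z; ring).
  set (c := P (2 * X 0)) in *.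
  assert (HPZ : P (Z t) - (c + K * t) <= 0).
  { apply (barrier_nonpos (fun s => P (Z s) - (c + K * s))
             (fun s => (dX s + 0) / Z s ^ S n - K) 0 t (P r - c - K * T)); try lra.
    - apply primitive_affine_continuous0; [|lra].
      apply (@continuous_plus R_UniformSpace R_AbsRing R_NormedModule); [exact HX0|].
      apply (@continuous_const R_UniformSpace R_UniformSpace).
    - intros s Hs. pose proof (HZ s ltac:(lra)).
      apply primitive_affine_derive; [lra|].
      apply (@is_derive_plus R_AbsRing R_NormedModule); [apply Hd; lra|].
      apply (@is_derive_const R_AbsRing R_NormedModule).
    - rewrite HZ0. unfold c. lra.
    - intros s Hs [_ Hlt].
      assert (HZs : 0 < Z s) by (pose proof (HZ s ltac:(lra)); lra).
      assert (HZn : 0 < Z s ^ S n) by (apply pow_lt, HZs).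
      assert (HZr : Z s < r)
        by (apply (inv_pow_primitive_lt_inv n); [exact HZs | exact Hr | fold P; nra]).
      assert (dX s <= K * Z s ^ S n).
      { pose proof (Hnonneg s ltac:(lra)).
        eapply Rle_trans; [apply Hgrow; unfold Z in HZr; lra|].
        apply Rmult_le_compat_l; [exact HK|]. apply pow_incr. unfold Z. lra. }
      enough ((dX s + 0) / Z s ^ S n <= K) by lra.
      apply (Rmult_le_reg_r (Z s ^ S n)); [exact HZn|].
      unfold Rdiv. rewrite Rmult_assoc, Rinv_l by lra. lra. }
  assert (HZt : Z t < r).
  { apply (inv_pow_primitive_lt_inv n); [pose proof (HZ t Ht); lra | exact Hr | fold P; nra]. }
  unfold Z in HZt. lra.
Qed.

(** * Bounds on [dpot] *)

Lemma sum_n_nonneg (u : nat -> R) N : (forall n, 0 <= u n) -> 0 <= sum_n u N.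
Proof.
  intros H. induction N as [|N IH].
  - rewrite sum_O. apply H.
  - rewrite sum_Sn. pose proof (H (S N)). change (0 <= sum_n u N + u (S N)). lra.
Qed.

Lemma sum_n_term_le (u : nat -> R) m N : (forall n, 0 <= u n) -> (m <= N)%nat ->
  u m <= sum_n u N.
Proof.
  intros H Hm. induction N as [|N IH].
  - replace m with 0%nat by lia. rewrite sum_O. lra.
  - rewrite sum_Sn. change (u m <= sum_n u N + u (S N)).
    destruct (Nat.eq_dec m (S N)) as [->|Hne].
    + pose proof (sum_n_nonneg u N H). lra.
    + pose proof (IH ltac:(lia)). pose proof (H (S N)). lra.
Qed.

(* No convergence is needed: a divergent nonnegative series has [Series] equal to [0]. *)
Lemma Series_nonneg (u : nat -> R) : (forall n, 0 <= u n) -> 0 <= Series u.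
Proof.
  intros H. unfold Series.
  assert (Hle : Rbar_le (Lim_seq (fun _ => 0)) (Lim_seq (sum_n u))).
  { apply Lim_seq_le_loc. exists 0%nat. intros n _. apply sum_n_nonneg, H. }
  rewrite Lim_seq_const in Hle.
  destruct (Lim_seq (sum_n u)); simpl in *; lra.
Qed.

Lemma Series_term_le (u : nat -> R) m : (forall n, 0 <= u n) -> ex_series u ->
  u m <= Series u.
Proof.
  intros H [l Hl]. rewrite (is_series_unique u l Hl).
  assert (Hle : Rbar_le (Lim_seq (fun _ => u m)) (Lim_seq (sum_n u))).
  { apply Lim_seq_le_loc. exists m. intros n Hn. apply sum_n_term_le; auto. }
  rewrite Lim_seq_const, (is_lim_seq_unique (sum_n u) l Hl) in Hle. exact Hle.
Qed.

Lemma pow_le_pow_of_le_1 x m n : 0 <= x <= 1 -> (m <= n)%nat -> x ^ n <= x ^ m.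
Proof.
  intros Hx Hmn. replace n with (m + (n - m))%nat by lia. rewrite pow_add.
  pose proof (pow_le x m (proj1 Hx)).
  pose proof (pow_le x (n - m) (proj1 Hx)).
  pose proof (pow_incr x 1 (n - m) Hx) as H1. rewrite pow1 in H1. nra.
Qed.

Definition dpot_term (a b : nat -> R) (s : R) (p : nat) : R :=
  INR p * ccoef a b p * s ^ (p - 1).

Section DpotEstimates.
Variables (a b : nat -> R) (pstar : nat) (rho : R).
Hypothesis hc0 : forall p, (p < pstar)%nat -> ccoef a b p = 0.
Hypothesis hcnn : forall p, 0 <= ccoef a b p.
Hypothesis hrho : 0 < rho.
Hypothesis hsum : ex_series (fun p => ccoef a b p * INR p * rho ^ p).

Lemma dpot_term_nonneg s p : 0 <= s -> 0 <= dpot_term a b s p.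
Proof.
  intros Hs. unfold dpot_term.
  apply Rmult_le_pos; [apply Rmult_le_pos; [apply pos_INR | apply hcnn] | apply pow_le, Hs].
Qed.

Lemma dpot_nonneg s : 0 <= s -> 0 <= dpot a b s.
Proof. intros Hs. apply Series_nonneg. intros p. apply dpot_term_nonneg, Hs. Qed.

Lemma ex_series_dpot_term s : 0 <= s <= rho -> ex_series (dpot_term a b s).
Proof.
  intros Hs.
  apply (@ex_series_le R_AbsRing R_CompleteNormedModule _
           (fun p => ccoef a b p * INR p * rho ^ p * / rho)); [| apply ex_series_scal_r, hsum].
  intros p. change (norm (dpot_term a b s p)) with (Rabs (dpot_term a b s p)).
  rewrite Rabs_pos_eq by (apply dpot_term_nonneg; lra).
  unfold dpot_term. destruct p as [|q].
  - simpl. rewrite !Rmult_0_r, !Rmult_0_l. lra.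
  - replace (S q - 1)%nat with q by lia.
    replace (ccoef a b (S q) * INR (S q) * rho ^ S q * / rho)
      with (INR (S q) * ccoef a b (S q) * rho ^ q) by (simpl; field; lra).
    apply Rmult_le_compat_l; [apply Rmult_le_pos; [apply pos_INR | apply hcnn]|].
    apply pow_incr. lra.
Qed.

Lemma dpot_ge_leading s : 0 <= s <= rho ->
  INR pstar * ccoef a b pstar * s ^ (pstar - 1) <= dpot a b s.
Proof.
  intros Hs. apply (Series_term_le (dpot_term a b s) pstar).
  - intros p. apply dpot_term_nonneg. lra.
  - apply ex_series_dpot_term, Hs.
Qed.

(* Termwise, [s ^ (p - 1) <= r ^ (p - 1) * (s / r) ^ (pstar - 1)] for [p >= pstar]. *)
Lemma dpot_le_scaled s r : 0 < r <= rho -> 0 <= s <= r ->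
  dpot a b s <= dpot a b r / r ^ (pstar - 1) * s ^ (pstar - 1).
Proof.
  intros Hr Hs.
  assert (Hx : 0 <= s / r <= 1).
  { split; [apply Rdiv_le_0_compat | apply (Rdiv_le_1 s r)]; lra. }
  assert (Hrp : 0 < r ^ (pstar - 1)) by (apply pow_lt; lra).
  apply Rle_trans with (Series (fun p => dpot_term a b r p * (s / r) ^ (pstar - 1))).
  - apply Series_le; [| apply ex_series_scal_r, ex_series_dpot_term; lra].
    intros p. split; [apply dpot_term_nonneg; lra|].
    unfold dpot_term. destruct (Nat.lt_ge_cases p pstar) as [Hp|Hp].
    + rewrite (hc0 p Hp), Rmult_0_r, !Rmult_0_l. lra.
    + replace s with (r * (s / r)) at 1 by (field; lra).
      rewrite Rpow_mult_distr, <- Rmult_assoc.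
      apply Rmult_le_compat_l.
      * apply Rmult_le_pos; [apply Rmult_le_pos; [apply pos_INR | apply hcnn] | apply pow_le; lra].
      * apply pow_le_pow_of_le_1; [exact Hx | lia].
  - rewrite Series_scal_r. unfold Rdiv. rewrite Rpow_mult_distr, pow_inv.
    change (dpot a b r) with (Series (dpot_term a b r)). right. field. lra.
Qed.

Lemma Rabs_dpot_le s : Rabs s <= rho -> Rabs (dpot a b s) <= dpot a b (Rabs s).
Proof.
  intros Hs.
  assert (Habs : forall p, Rabs (dpot_term a b s p) = dpot_term a b (Rabs s) p).
  { intros p. unfold dpot_term. rewrite !Rabs_mult, <- RPow_abs.
    rewrite (Rabs_pos_eq (INR p)), (Rabs_pos_eq (ccoef a b p)) by auto using pos_INR.
    reflexivity. }
  unfold dpot. fold (dpot_term a b s) (dpot_term a b (Rabs s)).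
  rewrite <- (Series_ext _ _ Habs). apply Series_Rabs.
  apply (ex_series_ext (dpot_term a b (Rabs s))); [intros; symmetry; apply Habs|].
  apply ex_series_dpot_term. split; [apply Rabs_pos | exact Hs].
Qed.

Lemma dpot_estimates : (2 <= pstar)%nat ->
  exists r K, 0 < r <= 1 / 2 /\ r <= rho /\ 0 <= K /\
    (forall s, 0 <= s <= r -> dpot a b s <= K * s ^ (pstar - 1)) /\
    (forall s, Rabs s <= r -> Rabs (dpot a b s) <= K * Rabs s).
Proof.
  intros Hp.
  set (r := Rmin (1 / 2) rho).
  assert (Hr : 0 < r <= 1 / 2) by (unfold r; split; [apply Rmin_glb_lt | apply Rmin_l]; lra).
  assert (Hrrho : r <= rho) by apply Rmin_r.
  set (K := dpot a b r / r ^ (pstar - 1)).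
  assert (HK : 0 <= K).
  { apply Rdiv_le_0_compat; [apply dpot_nonneg | apply pow_lt]; lra. }
  assert (Hup : forall s, 0 <= s <= r -> dpot a b s <= K * s ^ (pstar - 1))
    by (intros; apply dpot_le_scaled; lra).
  exists r, K. repeat split; try lra; auto.
  intros s Hs. eapply Rle_trans; [apply Rabs_dpot_le; lra|].
  eapply Rle_trans; [apply Hup; split; [apply Rabs_pos | exact Hs]|].
  apply Rmult_le_compat_l; [exact HK|].
  rewrite <- (pow_1 (Rabs s)) at 2.
  apply pow_le_pow_of_le_1; [split; [apply Rabs_pos | lra] | lia].
Qed.

End DpotEstimates.

(** * Overlap dynamics *)

Definition sq_neg_part (x : R) : R := Rmin x 0 ^ 2.

Lemma sq_neg_part_nonneg x : 0 <= sq_neg_part x.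
Proof. apply pow2_ge_0. Qed.

Lemma sq_neg_part_of_nonneg x : 0 <= x -> sq_neg_part x = 0.
Proof. intros Hx. unfold sq_neg_part. rewrite Rmin_right by exact Hx. ring. Qed.

Lemma sq_neg_part_of_neg x : x < 0 -> sq_neg_part x = x ^ 2.
Proof. intros Hx. unfold sq_neg_part. rewrite Rmin_left by lra. reflexivity. Qed.

Lemma sq_neg_part_derive x : is_derive sq_neg_part x (2 * Rmin x 0).
Proof.
  destruct (Rtotal_order x 0) as [Hx|[->|Hx]].
  - apply (is_derive_ext_loc (fun y => y ^ 2)).
    + eapply filter_imp; [|apply (open_lt 0 x Hx)].
      intros y Hy. symmetry. apply sq_neg_part_of_neg, Hy.
    + rewrite Rmin_left by lra. auto_derive; [exact I | ring].
  - apply is_derive_Reals. intros eps Heps. exists (mkposreal _ Heps).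
    intros h Hh Hlt. simpl in Hlt. rewrite Rplus_0_l, (sq_neg_part_of_nonneg 0) by lra.
    rewrite Rmin_right by lra.
    destruct (Rle_dec 0 h) as [Hpos|Hneg].
    + rewrite sq_neg_part_of_nonneg by exact Hpos.
      replace ((0 - 0) / h - 2 * 0) with 0 by (field; exact Hh). rewrite Rabs_R0. exact Heps.
    + rewrite sq_neg_part_of_neg by lra.
      replace ((h ^ 2 - 0) / h - 2 * 0) with h by (field; exact Hh). exact Hlt.
  - apply (is_derive_ext_loc (fun _ => 0)).
    + eapply filter_imp; [|apply (open_gt 0 x Hx)].
      intros y Hy. symmetry. apply sq_neg_part_of_nonneg. lra.
    + rewrite Rmin_right by lra. rewrite Rmult_0_r.
      apply (@is_derive_const R_AbsRing R_NormedModule).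
Qed.

Lemma sq_neg_part_continuous x : continuous sq_neg_part x.
Proof.
  apply (@ex_derive_continuous R_AbsRing R_NormedModule).
  eexists. apply sq_neg_part_derive.
Qed.

(* The contribution of the pair [(i, l)] to the derivative of [sq_neg_part u_i]: it is
   nonpositive unless both overlaps are negative, in which case [gl] is linearly small. *)
Lemma neg_part_drift_le ui ul Gil gl K :
  -1 <= ui <= 1 -> -1 <= ul <= 1 -> 0 <= Gil <= 1 -> 0 <= K ->
  (0 <= ul -> 0 <= gl) -> (ul < 0 -> Rabs gl <= K * Rabs ul) ->
  2 * Rmin ui 0 * (gl * (Gil - ui * ul)) <= 2 * K * (sq_neg_part ui + sq_neg_part ul).
Proof.
  intros Hui Hul HG HK Hgpos Hglip.
  pose proof (sq_neg_part_nonneg ui). pose proof (sq_neg_part_nonneg ul).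
  destruct (Rle_dec 0 ui) as [Hi|Hi].
  { rewrite Rmin_right by exact Hi. nra. }
  rewrite Rmin_left by lra.
  destruct (Rle_dec 0 ul) as [Hl|Hl].
  { assert (0 <= Gil - ui * ul) by nra.
    assert (0 <= gl * (Gil - ui * ul)) by (apply Rmult_le_pos; auto).
    assert (0 <= 2 * K * (sq_neg_part ui + sq_neg_part ul)) by (apply Rmult_le_pos; lra).
    nra. }
  rewrite !sq_neg_part_of_neg by lra.
  specialize (Hglip ltac:(lra)). rewrite (Rabs_left ul) in Hglip by lra.
  assert (Hfac : Rabs (Gil - ui * ul) <= 2) by (apply Rabs_le; nra).
  assert (Hprod : Rabs (gl * (Gil - ui * ul)) <= K * - ul * 2).
  { rewrite Rabs_mult. apply Rmult_le_compat; auto using Rabs_pos. }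
  apply Rabs_le_between in Hprod.
  pose proof (pow2_ge_0 (ui - ul)). nra.
Qed.

Lemma fsum_drift_split n (G : nat -> nat -> R) (x y : nat -> R) :
  fsum n (fun j => fsum n (fun l => y l * (G j l - x j * x l))) =
  fsum n (fun l => y l * fsum n (fun j => G j l)) - fsum n x * fsum n (fun l => y l * x l).
Proof.
  transitivity
    (fsum n (fun j => fsum n (fun l => y l * G j l) - x j * fsum n (fun l => y l * x l))).
  - apply fsum_ext. intros j _. rewrite <- fsum_scal, <- fsum_minus.
    apply fsum_ext. intros; ring.
  - rewrite fsum_minus, fsum_swap. f_equal.
    + apply fsum_ext. intros l _. apply fsum_scal.
    + rewrite Rmult_comm, <- fsum_scal. apply fsum_ext. intros; ring.
Qed.

(* An abstract form of the overlap dynamics [u_j' = sum_l g(u_l) (G_jl - u_j u_l)]: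
   [g] stands for [dpot a b] and [G] for the Gram matrix of the index vectors. *)
Section OverlapDynamics.
Variables (k n : nat) (g : R -> R) (G : nat -> nat -> R) (u : nat -> R -> R).
Variables (r kappa K : R).

Definition drift (j : nat) (t : R) : R :=
  fsum k (fun l => g (u l t) * (G j l - u j t * u l t)).

Definition overlap_sum (t : R) : R := fsum k (fun j => u j t).

Hypothesis Hk : (1 <= k)%nat.
Hypothesis Hr : 0 < r <= 1 / 2.
Hypothesis Hkappa : 0 < kappa.
Hypothesis HK : 0 <= K.
Hypothesis g_nonneg : forall s, 0 <= s -> 0 <= g s.
Hypothesis g_lower : forall s, 0 <= s <= r -> kappa * s ^ S n <= g s.
Hypothesis g_upper : forall s, 0 <= s <= r -> g s <= K * s ^ S n.
Hypothesis g_lip : forall s, Rabs s <= r -> Rabs (g s) <= K * Rabs s.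
Hypothesis G_diag : forall j, (j < k)%nat -> G j j = 1.
Hypothesis G_range : forall j l, (j < k)%nat -> (l < k)%nat -> 0 <= G j l <= 1.
Hypothesis u_range : forall j t, (j < k)%nat -> -1 <= u j t <= 1.
Hypothesis u_cont0 : forall j, continuous (u j) 0.
Hypothesis u_deriv : forall j t, 0 < t -> is_derive (u j) t (drift j t).
Hypothesis u_init : forall j, (j < k)%nat -> 0 < u j 0.

Lemma INR_k_pos : 0 < INR k.
Proof. apply lt_0_INR. lia. Qed.

Lemma neg_mass_drift_le t : 0 < t -> (forall j, (j < k)%nat -> - r < u j t) ->
  fsum k (fun j => drift j t * (2 * Rmin (u j t) 0))
  <= 4 * INR k * K * fsum k (fun j => sq_neg_part (u j t)).
Proof.
  intros Ht Hlow.
  apply Rle_trans with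
    (fsum k (fun i => fsum k (fun l => 2 * K * (sq_neg_part (u i t) + sq_neg_part (u l t))))).
  - apply fsum_le. intros i Hi. unfold drift.
    rewrite Rmult_comm, <- fsum_scal. apply fsum_le. intros l Hl.
    apply neg_part_drift_le; auto.
    intros Hneg. apply g_lip. specialize (Hlow l Hl). rewrite Rabs_left; lra.
  - right.
    transitivity (fsum k (fun i => 2 * K * (INR k * sq_neg_part (u i t)
                                           + fsum k (fun l => sq_neg_part (u l t))))).
    + apply fsum_ext. intros i _. rewrite <- fsum_const, <- fsum_plus, <- fsum_scal.
      reflexivity.
    + rewrite fsum_scal, fsum_plus, fsum_scal, fsum_const. ring.
Qed.

Lemma overlaps_nonneg j t : (j < k)%nat -> 0 <= t -> 0 <= u j t.
Proof.
  intros Hj Ht.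
  set (Q := fun s => fsum k (fun i => sq_neg_part (u i s))).
  assert (HQ : Q t <= 0).
  { apply (gronwall_nonpos Q (fun s => fsum k (fun i => drift i s * (2 * Rmin (u i s) 0)))
             0 t (4 * INR k * K) (r ^ 2)).
    - exact Ht.
    - pose proof Hr. nra.
    - pose proof INR_k_pos. apply Rmult_le_pos; lra.
    - apply continuous_fsum. intros i Hi.
      apply (@continuous_comp R_UniformSpace R_UniformSpace R_UniformSpace (u i) sq_neg_part).
      + apply u_cont0.
      + apply sq_neg_part_continuous.
    - intros s Hs. apply is_derive_fsum. intros i Hi.
      apply (@is_derive_comp R_AbsRing R_NormedModule sq_neg_part (u i)).
      + apply sq_neg_part_derive.
      + apply u_deriv. lra.
    - unfold Q. rewrite (fsum_ext k _ (fun _ => 0)), fsum_const; [lra|].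
      intros i Hi. apply sq_neg_part_of_nonneg, Rlt_le, u_init, Hi.
    - intros s Hs [_ HQs]. apply neg_mass_drift_le; [lra|].
      intros i Hi. apply Rnot_le_lt. intros Hle.
      assert (Hsq : sq_neg_part (u i s) <= Q s).
      { apply (fsum_term_le k (fun i => sq_neg_part (u i s))); auto.
        intros; apply sq_neg_part_nonneg. }
      rewrite sq_neg_part_of_neg in Hsq by lra.
      pose proof Hr. nra. }
  assert (Hsq : sq_neg_part (u j t) <= Q t).
  { apply (fsum_term_le k (fun i => sq_neg_part (u i t))); auto.
    intros; apply sq_neg_part_nonneg. }
  apply Rnot_lt_le. intros Hneg.
  rewrite sq_neg_part_of_neg in Hsq by exact Hneg. nra.
Qed.

Lemma overlap_le_sum j t : (j < k)%nat -> 0 <= t -> u j t <= overlap_sum t.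
Proof.
  intros Hj Ht. apply (fsum_term_le k (fun i => u i t)); [|exact Hj].
  intros i Hi. apply overlaps_nonneg; auto.
Qed.

Lemma overlap_sum_nonneg t : 0 <= t -> 0 <= overlap_sum t.
Proof. intros Ht. apply fsum_nonneg. intros j Hj. apply overlaps_nonneg; auto. Qed.

Lemma overlap_sum_init : 0 < overlap_sum 0.
Proof.
  assert (0 < u 0 0) by (apply u_init; lia).
  enough (u 0 0 <= overlap_sum 0) by lra.
  apply (fsum_term_le k (fun j => u j 0)); [|lia].
  intros j Hj. apply Rlt_le, u_init, Hj.
Qed.

Lemma overlap_sum_derive t : 0 < t -> is_derive overlap_sum t (fsum k (fun j => drift j t)).
Proof. intros Ht. apply is_derive_fsum. intros j Hj. apply u_deriv, Ht. Qed.

Lemma overlap_sum_continuous t : 0 <= t -> continuous overlap_sum t.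
Proof.
  intros Ht. destruct (Req_dec t 0) as [->|Ht0].
  - apply continuous_fsum. intros j Hj. apply u_cont0.
  - apply (@ex_derive_continuous R_AbsRing R_NormedModule).
    eexists. apply overlap_sum_derive. lra.
Qed.

Lemma drift_sum_eq t : fsum k (fun j => drift j t) =
  fsum k (fun l => g (u l t) * fsum k (fun j => G j l))
  - overlap_sum t * fsum k (fun l => g (u l t) * u l t).
Proof. apply (fsum_drift_split k G (fun j => u j t) (fun l => g (u l t))). Qed.

(* While the overlaps are small, the self-interaction [G l l = 1] dominates the drift
   of their sum, and the largest overlap is at least the average one. *)
Lemma drift_sum_lower t : 0 < t -> overlap_sum t <= r ->
  kappa / 2 * (/ INR k) ^ S n * overlap_sum t ^ S n <= fsum k (fun j => drift j t).
Proof.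
  intros Ht Hsmall. pose proof INR_k_pos as Hk0.
  set (s := overlap_sum t) in *.
  assert (Hs : 0 <= s) by (apply overlap_sum_nonneg; lra).
  assert (Hg : forall l, (l < k)%nat -> 0 <= g (u l t))
    by (intros; apply g_nonneg, overlaps_nonneg; auto; lra).
  set (Sg := fsum k (fun l => g (u l t))).
  assert (HSg : 0 <= Sg) by (apply fsum_nonneg; exact Hg).
  assert (Hself : Sg <= fsum k (fun l => g (u l t) * fsum k (fun j => G j l))).
  { apply fsum_le. intros l Hl.
    assert (1 <= fsum k (fun j => G j l)).
    { rewrite <- (G_diag l Hl). apply (fsum_term_le k (fun j => G j l)); [|exact Hl].
      intros; apply G_range; auto. }
    pose proof (Hg l Hl). nra. }
  assert (Hcross : fsum k (fun l => g (u l t) * u l t) <= s * Sg).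
  { unfold Sg. rewrite <- fsum_scal. apply fsum_le. intros l Hl.
    pose proof (overlap_le_sum l t Hl ltac:(lra)) as Hul. fold s in Hul.
    pose proof (Hg l Hl). nra. }
  assert (Hhalf : Sg / 2 <= fsum k (fun j => drift j t)).
  { rewrite drift_sum_eq. fold s.
    pose proof (Rmult_le_compat_l s _ _ Hs Hcross).
    assert (s * s <= 1 / 4) by (pose proof Hr; nra).
    assert (s * (s * Sg) <= 1 / 4 * Sg)
      by (rewrite <- Rmult_assoc; apply Rmult_le_compat_r; lra).
    lra. }
  destruct (fsum_le_max_term k (fun j => u j t) ltac:(lia)) as [j [Hj Hmax]].
  fold (overlap_sum t) s in Hmax.
  assert (Huj : 0 <= u j t <= r)
    by (pose proof (overlap_le_sum j t Hj ltac:(lra)) as Hle; fold s in Hle;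
        split; [apply overlaps_nonneg|]; auto; lra).
  assert (Hlead : kappa * (s * / INR k) ^ S n <= Sg).
  { eapply Rle_trans; [|apply (fsum_term_le k (fun l => g (u l t)) j Hg Hj)].
    eapply Rle_trans; [|apply g_lower, Huj].
    apply Rmult_le_compat_l; [lra|]. apply pow_incr. split.
    - apply Rmult_le_pos; [exact Hs | left; apply Rinv_0_lt_compat, Hk0].
    - apply (Rmult_le_reg_l (INR k)); [exact Hk0|].
      rewrite <- Rmult_assoc, Rinv_r_simpl_m by lra. lra. }
  rewrite Rpow_mult_distr in Hlead. lra.
Qed.

Lemma drift_sum_upper t : 0 < t -> overlap_sum t <= r ->
  fsum k (fun j => drift j t) <= INR k * INR k * K * overlap_sum t ^ S n.
Proof.
  intros Ht Hsmall.
  set (s := overlap_sum t) in *.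
  assert (Hs : 0 <= s) by (apply overlap_sum_nonneg; lra).
  rewrite drift_sum_eq. fold s.
  assert (0 <= s * fsum k (fun l => g (u l t) * u l t)).
  { apply Rmult_le_pos; [exact Hs|]. apply fsum_nonneg. intros l Hl.
    pose proof (overlaps_nonneg l t Hl ltac:(lra)) as Hul.
    pose proof (g_nonneg _ Hul). nra. }
  enough (fsum k (fun l => g (u l t) * fsum k (fun j => G j l))
          <= INR k * (INR k * K * s ^ S n)) by lra.
  apply fsum_le_const. intros l Hl.
  pose proof (overlaps_nonneg l t Hl ltac:(lra)) as Hul.
  pose proof (overlap_le_sum l t Hl ltac:(lra)) as Huls. fold s in Huls.
  assert (HG : 0 <= fsum k (fun j => G j l) <= INR k * 1).
  { split; [apply fsum_nonneg | apply fsum_le_const]; intros; apply G_range; auto. }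
  assert (Hgl : 0 <= g (u l t) <= K * s ^ S n).
  { split; [apply g_nonneg, Hul|]. eapply Rle_trans; [apply g_upper; lra|].
    apply Rmult_le_compat_l; [exact HK|]. apply pow_incr. lra. }
  pose proof (pos_INR k). nra.
Qed.

Lemma overlap_sum_escapes T : 0 <= T ->
  inv_pow_primitive n r <=
    inv_pow_primitive n (overlap_sum 0) + kappa / 2 * (/ INR k) ^ S n * T ->
  r <= overlap_sum T.
Proof.
  intros HT Hbudget. pose proof INR_k_pos. pose proof overlap_sum_init.
  set (rate := kappa / 2 * (/ INR k) ^ S n) in *.
  assert (Hrate : 0 <= rate).
  { apply Rmult_le_pos; [lra | apply pow_le; left; apply Rinv_0_lt_compat; lra]. }
  assert (Hgrow : forall t, 0 < t -> overlap_sum t <= r ->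
            0 <= overlap_sum t /\ rate * overlap_sum t ^ S n <= fsum k (fun j => drift j t)).
  { intros t Ht Hs. split; [apply overlap_sum_nonneg; lra | apply drift_sum_lower; auto]. }
  apply Rnot_lt_le. intros Hlt.
  assert (Hbelow : forall t, 0 <= t <= T -> overlap_sum t < r).
  { intros t Ht. apply Rnot_le_lt. intros Hle.
    enough (r <= overlap_sum T) by lra.
    apply (stays_above overlap_sum (fun s => fsum k (fun j => drift j s)) t T r); try lra.
    - apply overlap_sum_continuous. lra.
    - intros s Hs. apply overlap_sum_derive. lra.
    - intros s Hs Hsr. pose proof (Hgrow s ltac:(lra) ltac:(lra)) as [Hs0 Hd].
      pose proof (pow_le _ (S n) Hs0). nra. }
  destruct (primitive_growth_lower overlap_sum (fun t => fsum k (fun j => drift j t)) n rate T)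
    as [Hmono Hgrowth]; auto.
  - apply overlap_sum_continuous. lra.
  - intros t Ht. apply overlap_sum_derive. lra.
  - intros t Ht. apply Hgrow; [lra|]. left. apply Hbelow. lra.
  - pose proof (inv_pow_primitive_lt n (overlap_sum T) r ltac:(lra) (Hbelow T ltac:(lra))).
    lra.
Qed.

Lemma overlap_sum_stays_small T delta : 0 <= T -> 0 < delta <= r ->
  inv_pow_primitive n (2 * overlap_sum 0) + INR k * INR k * K * T < inv_pow_primitive n delta ->
  forall t, 0 <= t <= T -> overlap_sum t < delta.
Proof.
  intros HT Hdelta Hbudget.
  apply (primitive_growth_upper overlap_sum (fun t => fsum k (fun j => drift j t)) n
           (INR k * INR k * K) delta T); try lra; auto.
  - pose proof (pos_INR k). apply Rmult_le_pos; [nra | exact HK].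
  - apply overlap_sum_continuous. lra.
  - apply overlap_sum_init.
  - intros t Ht. apply overlap_sum_derive. lra.
  - intros t Ht. apply overlap_sum_nonneg. lra.
  - intros t Ht Hs. apply drift_sum_upper; lra.
Qed.

End OverlapDynamics.

(** * The spherical gradient flow *)

Lemma continuous_Rmax0_at_0 (f : R -> R) :
  filterlim f (at_right 0) (locally (f 0)) -> continuous (fun s => f (Rmax 0 s)) 0.
Proof.
  intros Hf. apply filterlim_locally. intros eps.
  apply filterlim_locally with (eps := eps) in Hf. destruct Hf as [del Hdel].
  exists del. intros y Hy. rewrite (Rmax_left 0 0) by lra.
  destruct (Rle_dec y 0).
  - rewrite Rmax_left by lra. apply ball_center.
  - rewrite Rmax_right by lra. apply Hdel; [exact Hy | lra].
Qed.

Lemma is_derive_Rmax0 (f : R -> R) t l : 0 < t -> is_derive f t l ->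
  is_derive (fun s => f (Rmax 0 s)) t l.
Proof.
  intros Ht Hd. apply (is_derive_ext_loc f); [|exact Hd].
  eapply filter_imp; [|apply (open_gt 0 t Ht)].
  intros s Hs. rewrite Rmax_right by lra. reflexivity.
Qed.

Lemma fsum_dot_comb d k (y : nat -> R) (c : nat -> R) (z : nat -> nat -> R) :
  fsum d (fun i => y i * fsum k (fun l => c l * z l i)) =
  fsum k (fun l => c l * dot d y (z l)).
Proof.
  transitivity (fsum d (fun i => fsum k (fun l => c l * (y i * z l i)))).
  - apply fsum_ext. intros i _. rewrite <- fsum_scal. apply fsum_ext. intros; ring.
  - rewrite fsum_swap. apply fsum_ext. intros l _. apply fsum_scal.
Qed.

Lemma dot_gradL a b d k V x y :
  dot d y (gradL a b d k V x) = - fsum k (fun l => dpot a b (dot d (V l) x) * dot d y (V l)).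
Proof.
  transitivity (-1 * fsum d (fun i => y i * fsum k (fun l => dpot a b (dot d (V l) x) * V l i))).
  - rewrite <- fsum_scal. apply fsum_ext. intros; unfold gradL; ring.
  - rewrite fsum_dot_comb. ring.
Qed.

Lemma dot_flow_field a b d k V x y :
  dot d y (flow_field a b d k V x) =
  fsum k (fun l => dpot a b (dot d (V l) x) * (dot d y (V l) - dot d y x * dot d (V l) x)).
Proof.
  set (gr := gradL a b d k V x).
  transitivity (-1 * dot d y gr + dot d x gr * dot d y x).
  - unfold dot at 1.
    rewrite (fsum_ext d _ (fun i => -1 * (y i * gr i) + dot d x gr * (y i * x i)))
      by (intros; unfold flow_field; fold gr; ring).
    rewrite fsum_plus, !fsum_scal. reflexivity.
  - unfold gr. rewrite !dot_gradL.
    rewrite (fsum_ext k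
      (fun l => dpot a b (dot d (V l) x) * (dot d y (V l) - dot d y x * dot d (V l) x))
      (fun l => dpot a b (dot d (V l) x) * dot d y (V l)
                         + - dot d y x * (dpot a b (dot d (V l) x) * dot d x (V l))))
      by (intros; rewrite (dot_comm d x); ring).
    rewrite fsum_plus, fsum_scal. ring.
Qed.

(** * Escape times *)

(* [sigma] is an escape time scale for the exponent [n]: from an initial overlap [c / sqrt d],
   the ODE [x' = x ^ (n+1)] needs time [beta * sigma d + O(1)] to reach a fixed level. *)
Definition escape_scale (n : nat) (sigma : nat -> R) : Prop :=
  (forall M, exists D0, forall d, (D0 <= d)%nat -> M <= sigma d) /\
  (forall c, 0 < c -> exists alpha beta, 0 < beta /\
     forall d, (1 <= d)%nat -> inv_pow_primitive n (c / sqrt (INR d)) = alpha - beta * sigma d).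

Lemma escape_scale_large n sigma beta M : escape_scale n sigma -> 0 < beta ->
  exists D0, forall d, (D0 <= d)%nat -> 0 <= sigma d /\ M < beta * sigma d.
Proof.
  intros [Hunb _] Hbeta. destruct (Hunb (Rmax 0 (M / beta + 1))) as [D0 HD0].
  exists D0. intros d Hd. pose proof (HD0 d Hd).
  pose proof (Rmax_l 0 (M / beta + 1)). pose proof (Rmax_r 0 (M / beta + 1)).
  split; [lra|].
  replace M with (beta * (M / beta)) by (field; lra).
  apply Rmult_lt_compat_l; lra.
Qed.

Lemma INR_eventually_ge M : exists D0, forall d, (D0 <= d)%nat -> M <= INR d.
Proof.
  destruct (is_lim_seq_INR (fun x => M <= x)) as [D0 HD0].
  - exists M. intros x Hx. lra.
  - exists D0. exact HD0.
Qed.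

Lemma Rpower_half_pow x n : 0 < x -> Rpower x (INR n / 2) = sqrt x ^ n.
Proof.
  intros Hx. rewrite <- Rpower_sqrt by exact Hx.
  rewrite <- Rpower_pow by apply exp_pos.
  rewrite Rpower_mult. f_equal. field.
Qed.

Lemma escape_scale_pow n : (1 <= n)%nat ->
  escape_scale n (fun d => Rpower (INR d) (INR n / 2)).
Proof.
  intros Hn. split.
  - intros M. destruct (INR_eventually_ge (Rmax 1 M ^ 2)) as [D0 HD0].
    exists D0. intros d Hd. pose proof (HD0 d Hd) as Hdx.
    assert (H1 : 1 <= Rmax 1 M) by apply Rmax_l.
    assert (Hsq : Rmax 1 M <= sqrt (INR d)).
    { rewrite <- (sqrt_pow2 (Rmax 1 M)) by lra. apply sqrt_le_1_alt, Hdx. }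
    rewrite Rpower_half_pow by (pose proof (pow_R1_Rle _ 2 H1); lra).
    eapply Rle_trans; [apply Rmax_r|]. eapply Rle_trans; [exact Hsq|].
    rewrite <- (pow_1 (sqrt (INR d))) at 1. apply Rle_pow; [lra | exact Hn].
  - intros c Hc. exists 0, (/ (INR n * c ^ n)). split.
    + apply Rinv_0_lt_compat, Rmult_lt_0_compat; [apply lt_0_INR; lia | apply pow_lt, Hc].
    + intros d Hd. assert (Hsd : 0 < sqrt (INR d)) by (apply sqrt_lt_R0, lt_0_INR; lia).
      rewrite Rpower_half_pow by (apply lt_0_INR; lia).
      destruct n as [|m]; [lia|]. unfold inv_pow_primitive.
      unfold Rdiv. rewrite Rpow_mult_distr, pow_inv.
      assert (0 < INR (S m)) by (apply lt_0_INR; lia).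
      assert (0 < c ^ S m) by (apply pow_lt, Hc).
      assert (0 < sqrt (INR d) ^ S m) by (apply pow_lt, Hsd).
      field. repeat split; lra.
Qed.

Lemma escape_scale_ln : escape_scale 0 (fun d => ln (INR d)).
Proof.
  split.
  - intros M. destruct (INR_eventually_ge (exp M)) as [D0 HD0].
    exists D0. intros d Hd. rewrite <- (ln_exp M). apply ln_le; [apply exp_pos | apply HD0, Hd].
  - intros c Hc. exists (ln c), (/ 2). split; [lra|].
    intros d Hd. assert (HdR : 0 < INR d) by (apply lt_0_INR; lia).
    simpl. rewrite ln_div by (auto; apply sqrt_lt_R0, HdR).
    rewrite <- Rpower_sqrt by exact HdR. unfold Rpower. rewrite ln_exp. ring.
Qed.

Section EscapeTime.
Variables (a b : nat -> R) (k n : nat) (A : nat -> nat -> R) (r kappa K : R).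
Hypothesis Hk : (1 <= k)%nat.
Hypothesis Hr : 0 < r <= 1 / 2.
Hypothesis Hkappa : 0 < kappa.
Hypothesis HK : 0 <= K.
Hypothesis g_nonneg : forall s, 0 <= s -> 0 <= dpot a b s.
Hypothesis g_lower : forall s, 0 <= s <= r -> kappa * s ^ S n <= dpot a b s.
Hypothesis g_upper : forall s, 0 <= s <= r -> dpot a b s <= K * s ^ S n.
Hypothesis g_lip : forall s, Rabs s <= r -> Rabs (dpot a b s) <= K * Rabs s.

Section Instance.
Variables (c1 c2 : R) (d : nat) (V : nat -> nat -> R) (w : R -> nat -> R).
Hypothesis Hadm : admissible a b k A c1 c2 d V w.

(* Freezing [w] at [w 0] for negative times makes the overlaps continuous at [0]. *)
Definition overlap (j : nat) (t : R) : R := u_of d V w (Rmax 0 t) j.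

Definition gram (j l : nat) : R := dot d (V j) (V l).

Lemma gram_diag j : (j < k)%nat -> gram j j = 1.
Proof. destruct Hadm as [HV _]. apply HV. Qed.

Lemma gram_range j l : (j < k)%nat -> (l < k)%nat -> 0 <= gram j l <= 1.
Proof.
  intros Hj Hl. destruct Hadm as [HV [_ [_ [HG _]]]]. split; [apply HG; auto|].
  pose proof (Rabs_dot_le d (V j) (V l)) as H. rewrite !HV in H by auto.
  unfold gram. apply Rabs_le_between in H. lra.
Qed.

Lemma overlap_range j t : (j < k)%nat -> -1 <= overlap j t <= 1.
Proof.
  intros Hj. destruct Hadm as [HV [_ [_ [_ [[_ [_ Hunit]] _]]]]].
  pose proof (Rabs_dot_le d (V j) (w (Rmax 0 t))) as H.
  rewrite HV, Hunit in H by (auto; apply Rmax_l).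
  apply Rabs_le_between in H. unfold overlap, u_of. lra.
Qed.

Lemma overlap_continuous0 j : continuous (overlap j) 0.
Proof.
  destruct Hadm as [_ [_ [_ [_ [[Hcont _] _]]]]].
  apply continuous_fsum. intros i Hi.
  apply (@continuous_mult R_UniformSpace R_AbsRing).
  - apply (@continuous_const R_UniformSpace R_UniformSpace).
  - apply (continuous_Rmax0_at_0 (fun s => w s i)), Hcont, Hi.
Qed.

Lemma overlap_derive j t : 0 < t ->
  is_derive (overlap j) t (drift k (dpot a b) gram overlap j t).
Proof.
  intros Ht. destruct Hadm as [_ [_ [_ [_ [[_ [Hder _]] _]]]]].
  unfold drift, overlap, gram, u_of. rewrite Rmax_right by lra.
  rewrite <- dot_flow_field. apply is_derive_fsum. intros i Hi.
  apply is_derive_scal, (is_derive_Rmax0 (fun s => w s i)); [exact Ht | apply Hder; auto].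
Qed.

Lemma overlap_init_pos j : (j < k)%nat -> 0 < overlap j 0.
Proof.
  intros Hj. destruct Hadm as [_ [_ [_ [_ [_ Hinit]]]]].
  unfold overlap. rewrite Rmax_left by lra. apply Hinit, Hj.
Qed.

Lemma overlap_init_bounds j : (j < k)%nat ->
  c1 / sqrt (INR d) <= overlap j 0 <= c2 / sqrt (INR d).
Proof.
  intros Hj. destruct Hadm as [_ [_ [_ [_ [_ Hinit]]]]].
  unfold overlap. rewrite Rmax_left by lra. apply Hinit, Hj.
Qed.

Lemma unorm_eq t : 0 <= t -> unorm d k V w t = norm2 k (fun j => overlap j t).
Proof. intros Ht. unfold unorm, overlap. rewrite Rmax_right by exact Ht. reflexivity. Qed.

Lemma overlap_sum_init_bounds :
  INR k * (c1 / sqrt (INR d)) <= overlap_sum k overlap 0 <= INR k * (c2 / sqrt (INR d)).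
Proof.
  split; [apply fsum_ge_const | apply fsum_le_const]; intros j Hj; apply overlap_init_bounds, Hj.
Qed.

Lemma unorm_le_sqrt_k t : 0 <= t -> unorm d k V w t <= sqrt (INR k).
Proof.
  intros Ht. rewrite unorm_eq by exact Ht. apply norm2_le_sqrt.
  intros j Hj. apply overlap_range, Hj.
Qed.

Lemma unorm_escapes T : 0 < c1 -> (1 <= d)%nat -> 0 <= T ->
  inv_pow_primitive n r <=
    inv_pow_primitive n (INR k * c1 / sqrt (INR d)) + kappa / 2 * (/ INR k) ^ S n * T ->
  r / INR k <= unorm d k V w T.
Proof.
  intros Hc1 Hd HT Hbudget.
  assert (Hk0 : 0 < INR k) by (apply lt_0_INR; lia).
  assert (Hx0 : 0 < INR k * c1 / sqrt (INR d)).
  { apply Rdiv_lt_0_compat; [nra | apply sqrt_lt_R0, lt_0_INR; lia]. }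
  assert (Hesc : r <= overlap_sum k overlap T).
  { apply (overlap_sum_escapes k n (dpot a b) gram overlap r kappa K Hk Hr Hkappa HK
             g_nonneg g_lower g_lip gram_diag gram_range overlap_range overlap_continuous0
             overlap_derive overlap_init_pos T HT).
    eapply Rle_trans; [exact Hbudget|]. apply Rplus_le_compat_r, inv_pow_primitive_le; [exact Hx0|].
    unfold Rdiv. rewrite Rmult_assoc. apply overlap_sum_init_bounds. }
  rewrite unorm_eq by exact HT.
  pose proof (fsum_le_norm2 k (fun j => overlap j T) ltac:(lia)) as Hnorm.
  apply (Rmult_le_reg_l (INR k)); [exact Hk0|]. unfold Rdiv.
  rewrite <- Rmult_assoc, Rinv_r_simpl_m by lra.
  eapply Rle_trans; [exact Hesc|]. apply Hnorm. intros j Hj.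
  apply (overlaps_nonneg k (dpot a b) gram overlap r K Hk Hr HK g_nonneg g_lip gram_range
           overlap_range overlap_continuous0 overlap_derive overlap_init_pos); auto.
Qed.

Lemma unorm_stays_small T delta : 0 <= T -> 0 < delta <= r ->
  inv_pow_primitive n (2 * INR k * c2 / sqrt (INR d)) + INR k * INR k * K * T
    < inv_pow_primitive n delta ->
  forall t, 0 <= t <= T -> unorm d k V w t < delta.
Proof.
  intros HT Hdelta Hbudget t Ht.
  pose proof (overlap_sum_init k overlap Hk overlap_init_pos) as HS0.
  assert (Hsmall : overlap_sum k overlap t < delta).
  { apply (overlap_sum_stays_small k n (dpot a b) gram overlap r K Hk Hr HK g_nonneg g_upper
             g_lip gram_range overlap_range overlap_continuous0 overlap_derive overlap_init_pos
             T delta HT Hdelta); [|exact Ht].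
    eapply Rle_lt_trans; [|exact Hbudget]. apply Rplus_le_compat_r.
    apply inv_pow_primitive_le; [lra|].
    unfold Rdiv. rewrite !Rmult_assoc. apply Rmult_le_compat_l; [lra|].
    apply overlap_sum_init_bounds. }
  rewrite unorm_eq by lra.
  eapply Rle_lt_trans; [|exact Hsmall]. apply norm2_le_fsum. intros j Hj.
  apply (overlaps_nonneg k (dpot a b) gram overlap r K Hk Hr HK g_nonneg g_lip gram_range
           overlap_range overlap_continuous0 overlap_derive overlap_init_pos); auto; lra.
Qed.

End Instance.

Variable sigma : nat -> R.
Hypothesis Hscale : escape_scale n sigma.

Lemma escape_sufficient c1 c2 : 0 < c1 ->
  exists delta Delta C : R, exists D0 : nat, 0 < delta /\ 0 < C /\
    forall d, (D0 <= d)%nat -> forall V w, admissible a b k A c1 c2 d V w ->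
      delta <= unorm d k V w (C * sigma d) <= Delta.
Proof.
  intros Hc1. destruct Hscale as [_ Hid].
  assert (Hk0 : 0 < INR k) by (apply lt_0_INR; lia).
  set (rate := kappa / 2 * (/ INR k) ^ S n).
  assert (Hrate : 0 < rate).
  { apply Rmult_lt_0_compat; [lra | apply pow_lt, Rinv_0_lt_compat, Hk0]. }
  destruct (Hid (INR k * c1) ltac:(nra)) as [alpha [beta [Hbeta Heq]]].
  destruct (escape_scale_large n sigma beta (inv_pow_primitive n r - alpha) Hscale Hbeta)
    as [D1 HD1].
  exists (r / INR k), (sqrt (INR k)), (2 * beta / rate), (Nat.max D1 1).
  split; [apply Rdiv_lt_0_compat; lra|]. split; [apply Rdiv_lt_0_compat; lra|].
  intros d Hd V w Hadm.
  destruct (HD1 d ltac:(lia)) as [Hsig0 Hsig1].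
  assert (HT : 0 <= 2 * beta / rate * sigma d)
    by (apply Rmult_le_pos; [apply Rdiv_le_0_compat|]; lra).
  split.
  - apply (unorm_escapes c1 c2 d V w Hadm); auto; [lia|].
    rewrite Heq by lia. fold rate.
    replace (rate * (2 * beta / rate * sigma d)) with (2 * (beta * sigma d)) by (field; lra).
    lra.
  - apply (unorm_le_sqrt_k c1 c2 d V w Hadm), HT.
Qed.

Lemma escape_necessary c1 c2 : 0 < c2 -> forall delta, 0 < delta ->
  exists c : R, exists D0 : nat, 0 < c /\
    forall d, (D0 <= d)%nat -> forall V w, admissible a b k A c1 c2 d V w ->
      forall t, 0 <= t <= c * sigma d -> unorm d k V w t < delta.
Proof.
  intros Hc2 delta Hdelta. destruct Hscale as [_ Hid].
  assert (Hk0 : 0 < INR k) by (apply lt_0_INR; lia).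
  set (delta' := Rmin delta r).
  assert (Hdelta' : 0 < delta' <= r)
    by (unfold delta'; split; [apply Rmin_glb_lt | apply Rmin_r]; lra).
  assert (delta' <= delta) by apply Rmin_l.
  set (rate := INR k * INR k * K).
  assert (Hrate : 0 <= rate) by (apply Rmult_le_pos; [nra | exact HK]).
  destruct (Hid (2 * INR k * c2) ltac:(nra)) as [alpha [beta [Hbeta Heq]]].
  destruct (escape_scale_large n sigma beta (2 * (alpha - inv_pow_primitive n delta'))
              Hscale Hbeta) as [D1 HD1].
  exists (beta / (2 * (rate + 1))), (Nat.max D1 1).
  split; [apply Rdiv_lt_0_compat; lra|].
  intros d Hd V w Hadm t Ht.
  destruct (HD1 d ltac:(lia)) as [Hsig0 Hsig1].
  set (T := beta / (2 * (rate + 1)) * sigma d) in *.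
  assert (HrateT : rate * T <= beta * sigma d / 2).
  { unfold T. replace (rate * (beta / (2 * (rate + 1)) * sigma d))
      with (rate / (rate + 1) * (beta * sigma d / 2)) by (field; lra).
    rewrite <- (Rmult_1_l (beta * sigma d / 2)) at 2.
    apply Rmult_le_compat_r; [apply Rdiv_le_0_compat; [apply Rmult_le_pos|]; lra|].
    apply (Rdiv_le_1 rate (rate + 1)); lra. }
  enough (unorm d k V w t < delta') by lra.
  apply (unorm_stays_small c1 c2 d V w Hadm T delta'); [lra | exact Hdelta' | | exact Ht].
  rewrite Heq by lia. fold rate. lra.
Qed.

Lemma escape_time_Theta_of_scale : escape_time_Theta a b k A sigma.
Proof.
  intros c1 c2 Hc1 Hc12. split.
  - apply escape_sufficient, Hc1.
  - apply escape_necessary. lra.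
Qed.

End EscapeTime.

Lemma escape_time_Theta_of_series a b k A pstar rho sigma :
  (1 <= k)%nat -> (2 <= pstar)%nat ->
  (forall p, (p < pstar)%nat -> ccoef a b p = 0) -> (forall p, 0 <= ccoef a b p) ->
  0 < ccoef a b pstar -> 0 < rho -> ex_series (fun p => ccoef a b p * INR p * rho ^ p) ->
  escape_scale (pstar - 2) sigma -> escape_time_Theta a b k A sigma.
Proof.
  intros Hk Hp hc0 hcnn Hcpos Hrho Hser Hscale.
  destruct (dpot_estimates a b pstar rho hc0 hcnn Hrho Hser Hp)
    as [r [K [Hr [Hrrho [HK [Hup Hlip]]]]]].
  replace (pstar - 1)%nat with (S (pstar - 2)) in Hup by lia.
  apply (escape_time_Theta_of_scale a b k (pstar - 2) A r (INR pstar * ccoef a b pstar) K);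
    auto.
  - apply Rmult_lt_0_compat; [apply lt_0_INR; lia | exact Hcpos].
  - intros s Hs. apply (dpot_nonneg a b hcnn), Hs.
  - intros s Hs. replace (S (pstar - 2)) with (pstar - 1)%nat by lia.
    apply (dpot_ge_leading a b pstar rho hcnn Hrho Hser). lra.
Qed.

Lemma gram_quadratic_form d k (V : nat -> nat -> R) (x : nat -> R) :
  fsum k (fun i => x i * fsum k (fun j => x j * dot d (V i) (V j))) =
  dot d (fun m => fsum k (fun j => x j * V j m)) (fun m => fsum k (fun j => x j * V j m)).
Proof.
  set (y := fun m => fsum k (fun j => x j * V j m)).
  symmetry. change (dot d y y) with (fsum d (fun m => y m * fsum k (fun j => x j * V j m))).
  rewrite fsum_dot_comb. apply fsum_ext. intros i _. f_equal.
  rewrite dot_comm.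
  change (dot d (V i) y) with (fsum d (fun m => V i m * fsum k (fun j => x j * V j m))).
  apply fsum_dot_comb.
Qed.

Lemma lambda_max_pos a b k A c1 c2 d V w lam :
  admissible a b k A c1 c2 d V w -> is_eigenvalue k A lam -> 0 < lam.
Proof.
  intros [_ [Hindep [HA _]]] [x [[j0 [Hj0 Hx0]] Heig]].
  set (y := fun m => fsum k (fun j => x j * V j m)).
  assert (Hquad : lam * fsum k (fun i => x i * x i) = dot d y y).
  { unfold y. rewrite <- gram_quadratic_form, <- fsum_scal. apply fsum_ext. intros i Hi.
    rewrite (fsum_ext k _ (fun j => A i j * x j)) by (intros; rewrite HA by auto; ring).
    rewrite Heig by exact Hi. ring. }
  assert (Hx : x j0 * x j0 <= fsum k (fun i => x i * x i))
    by (apply (fsum_term_le k (fun i => x i * x i)); auto; intros; nra).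
  assert (0 < x j0 * x j0) by exact (Rsqr_pos_lt _ Hx0).
  apply Rnot_le_lt. intros Hlam.
  assert (Hy : forall m, (m < d)%nat -> y m = 0).
  { intros m Hm.
    assert (y m * y m <= dot d y y)
      by (apply (fsum_term_le d (fun i => y i * y i)); auto; intros; nra).
    nra. }
  apply Hx0, (Hindep x Hy j0 Hj0).
Qed.

Lemma escape_time_Theta_vacuous a b k A sigma :
  (forall c1 c2 d V w, ~ admissible a b k A c1 c2 d V w) -> escape_time_Theta a b k A sigma.
Proof.
  intros Hno c1 c2 _ _. split.
  - exists 1, 1, 1, 0%nat. split; [lra|]. split; [lra|].
    intros d _ V w Hadm. exfalso. exact (Hno _ _ _ _ _ Hadm).
  - intros delta _. exists 1, 0%nat. split; [lra|].
    intros d _ V w Hadm. exfalso. exact (Hno _ _ _ _ _ Hadm).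
Qed.

Theorem theorem1
  (k : nat) (A : nat -> nat -> R) (a b : nat -> R) (pstar : nat)
  (Hk : (1 <= k)%nat)
  (Ha0 : a 0%nat = 0) (Hb0 : b 0%nat = 0)
  (Ha2 : ex_series (fun p => a p ^ 2)) (Hb2 : ex_series (fun p => b p ^ 2))
  (Hpstar : info_exponent b pstar)
  (Hcpos : 0 < ccoef a b pstar)
  (Hcnn : forall p, (pstar <= p)%nat -> 0 <= ccoef a b p)
  (Hsum : exists lam, is_lambda_max k A lam /\
            ex_series (fun p => if (pstar <=? p)%nat
                                then ccoef a b p * INR p * sqrt lam ^ p else 0))
  (Hp2 : (2 <= pstar)%nat) :
  ((3 <= pstar)%nat ->
     escape_time_Theta a b k A
       (fun d => Rpower (INR d) (INR pstar / 2 - 1))) /\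
  (pstar = 2%nat ->
     escape_time_Theta a b k A (fun d => ln (INR d))).
Proof.
  assert (hc0 : forall p, (p < pstar)%nat -> ccoef a b p = 0).
  { destruct Hpstar as [_ [_ Hb]].
    intros [|p] Hp; unfold ccoef; [rewrite Ha0 | rewrite Hb by lia]; ring. }
  assert (hcnn : forall p, 0 <= ccoef a b p).
  { intros p. destruct (Nat.lt_ge_cases p pstar) as [Hp|Hp];
      [rewrite hc0 by exact Hp; lra | apply Hcnn, Hp]. }
  destruct Hsum as [lam [Hlam Hser]].
  destruct (Rle_lt_dec lam 0) as [Hlam0|Hlam0].
  { split; intros _; apply escape_time_Theta_vacuous; intros c1 c2 d V w Hadm;
      pose proof (lambda_max_pos a b k A c1 c2 d V w lam Hadm (proj1 Hlam)); lra. }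
  assert (Hser' : ex_series (fun p => ccoef a b p * INR p * sqrt lam ^ p)).
  { refine (ex_series_ext _ _ _ Hser). intros p.
    destruct (Nat.leb_spec pstar p) as [Hp|Hp]; [reflexivity|].
    rewrite hc0 by exact Hp. rewrite !Rmult_0_l. reflexivity. }
  split; intros Hp; apply (escape_time_Theta_of_series a b k A pstar (sqrt lam));
    auto using sqrt_lt_R0.
  - replace (INR pstar / 2 - 1) with (INR (pstar - 2) / 2)
      by (rewrite minus_INR by lia; simpl; field).
    apply escape_scale_pow. lia.
  - subst pstar. apply escape_scale_ln.
Qed.
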